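(* Let $\mathbf n\ge 2$ and let $A,B,C\cong\mathbb C^{\mathbf n^2}$ have bases $\{x^i_j\},\{y^j_k\},\{z^k_i\}$ ($1\le i,j,k\le\mathbf n$). Let $M_{\langle\mathbf n\rangle}=\sum_{i,j,k=1}^{\mathbf n}x^i_j\otimes y^j_k\otimes z^k_i$ and let $$M^{red}_{\langle\mathbf n\rangle}=M_{\langle\mathbf n\rangle}-\sum_{j=1}^{\mathbf n}x^1_{\mathbf n}\otimes y^{\mathbf n}_j\otimes z^j_1.$$ Then $\underline{\mathbf R}(M_{\langle\mathbf n\rangle})\ge\underline{\mathbf R}(M^{red}_{\langle\mathbf n\rangle})+1$.
   Context: The border rank $\underline{\mathbf R}(T)$ of a tensor $T$ is the smallest $r$ such that $T$ is a limit of sums of $r$ rank one tensors $a\otimes b\otimes c$. $M_{\langle\mathbf n\rangle}$ is the $\mathbf n\times\mathbf n$ matrix multiplication tensor. *)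

From Stdlib Require Import Reals Lra Lia Arith.
Open Scope R_scope.

Definition Cx : Type := (R * R)%type.
Definition C0 : Cx := (0, 0).
Definition C1 : Cx := (1, 0).
Definition Cadd (z w : Cx) : Cx := (fst z + fst w, snd z + snd w).
Definition Copp (z : Cx) : Cx := (- fst z, - snd z).
Definition Csub (z w : Cx) : Cx := Cadd z (Copp w).
Definition Cmul (z w : Cx) : Cx :=
  (fst z * fst w - snd z * snd w, fst z * snd w + snd z * fst w).
Definition Cmod (z : Cx) : R := sqrt (fst z * fst z + snd z * snd z).

Fixpoint Csum (r : nat) (f : nat -> Cx) : Cx :=
  match r with
  | O => C0
  | S r' => Cadd (Csum r' f) (f r')
  end.

(** A = B = C = C^(n^2): coordinates are indexed by pairs (i, j) with
    0 <= i, j < n (0-based version of the paper's 1..n).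
    A vector is a function from index pairs to Cx; a tensor in A ⊗ B ⊗ C is
    a function of three index pairs (only indices in range matter). *)
Definition idx := (nat * nat)%type.
Definition vec := idx -> Cx.
Definition tensor := idx -> idx -> idx -> Cx.

Definition in_range (n : nat) (p : idx) : Prop := (fst p < n)%nat /\ (snd p < n)%nat.

Definition sum_rank_one (r : nat) (a b c : nat -> vec) : tensor :=
  fun p q s => Csum r (fun l => Cmul (Cmul (a l p) (b l q)) (c l s)).

(** T is a limit of sums of r rank-one tensors (Euclidean topology on the
    finite-dimensional space A⊗B⊗C, expressed coordinatewise). *)
Definition border_rank_le (n : nat) (T : tensor) (r : nat) : Prop :=
  forall eps : R, eps > 0 ->
    exists a b c : nat -> vec,
      forall p q s, in_range n p -> in_range n q -> in_range n s ->
        Cmod (Csub (T p q s) (sum_rank_one r a b c p q s)) < eps.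

Definition is_border_rank (n : nat) (T : tensor) (br : nat) : Prop :=
  border_rank_le n T br /\ (forall r, border_rank_le n T r -> (br <= r)%nat).

(** Basis tensors: x^i_j ↔ (i,j), y^j_k ↔ (j,k), z^k_i ↔ (k,i). *)
Definition basis3 (p0 q0 s0 : idx) : tensor :=
  fun p q s =>
    if (Nat.eqb (fst p) (fst p0) && Nat.eqb (snd p) (snd p0)
        && Nat.eqb (fst q) (fst q0) && Nat.eqb (snd q) (snd q0)
        && Nat.eqb (fst s) (fst s0) && Nat.eqb (snd s) (snd s0))%bool
    then C1 else C0.

Fixpoint tsum (m : nat) (f : nat -> tensor) : tensor :=
  match m with
  | O => fun _ _ _ => C0
  | S m' => fun p q s => Cadd (tsum m' f p q s) (f m' p q s)
  end.

Definition tsub (T U : tensor) : tensor := fun p q s => Csub (T p q s) (U p q s).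

Definition matmul_tensor (n : nat) : tensor :=
  tsum n (fun i => tsum n (fun j => tsum n (fun k =>
    basis3 (i, j) (j, k) (k, i)))).

(** M^red_<n> = M_<n> - sum_j x^1_n ⊗ y^n_j ⊗ z^j_1  (1 ↦ 0, n ↦ n-1). *)
Definition matmul_red (n : nat) : tensor :=
  tsub (matmul_tensor n)
       (tsum n (fun j => basis3 (0%nat, (n - 1)%nat) ((n - 1)%nat, j) (j, 0%nat))).

(* Take an approximation of M by r+1 rank-one terms with error t^3 and a term
   whose A-factor a is nonzero.  Relabelling rows and columns, and then rescaling
   by a torus element that fixes M and inflates errors by at most t^-2, we may
   assume that the largest coordinate of a sits at E = x^1_n and that all other
   coordinates of a are at most t times it.  The projection of A onto {x_E = 0}
   along a kills that term and maps M to M with its E-slice removed, which is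
   M^red, up to an error O(t).  So M^red is a limit of sums of r rank-one
   tensors. *)

From Pilot Require Import Defs.
From Stdlib Require Import Reals Lra Lia Classical List.
From Coquelicot Require Import Coquelicot.

Local Open Scope C_scope.

(* The complex operations of [Defs] are convertible to Coquelicot's, so its
   [ring] structure on [C] applies to them. *)
Ltac cring :=
  match goal with |- ?a = ?b => change (@eq C a b) end;
  try change Cmul with Cmult; try change Cadd with Cplus;
  try change Csub with Cminus; try change Defs.Copp with Copp;
  try change Defs.C0 with (RtoC 0); try change Defs.C1 with (RtoC 1); ring.

Lemma Cmod_Defs (z : Cx) : Defs.Cmod z = Cmod z.
Proof. unfold Defs.Cmod, Cmod; f_equal; simpl; ring. Qed.

Lemma Cmod_RtoC_mult (x : R) (z : C) : (0 <= x)%R -> Cmod (RtoC x * z) = (x * Cmod z)%R.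
Proof. intros. rewrite Cmod_mult, Cmod_R, Rabs_pos_eq by lra. reflexivity. Qed.

Lemma idx_eq_dec (p q : idx) : {p = q} + {p <> q}.
Proof. decide equality; apply Nat.eq_dec. Qed.

Lemma Csum_S r f : Csum (S r) f = Csum r f + f r.
Proof. reflexivity. Qed.

Lemma Csum_ext r f g : (forall l, (l < r)%nat -> f l = g l) -> Csum r f = Csum r g.
Proof.
  induction r as [|r IH]; intros Hfg; [reflexivity|].
  rewrite !Csum_S, IH by (intros; apply Hfg; lia).
  rewrite Hfg by lia; reflexivity.
Qed.

Lemma Csum_eq0 r (f : nat -> C) : (forall l, (l < r)%nat -> f l = 0) -> Csum r f = (0 : C).
Proof.
  induction r as [|r IH]; intros Hf; [reflexivity|].
  rewrite Csum_S, IH by (intros; apply Hf; lia).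
  rewrite Hf by lia; cring.
Qed.

Lemma Csum_single r (f : nat -> C) k : (forall l, (l < r)%nat -> l <> k -> f l = 0) ->
  Csum r f = if (k <? r)%nat then f k else (0 : C).
Proof.
  induction r as [|r IH]; intros Hf; [reflexivity|].
  rewrite Csum_S, IH by (intros; apply Hf; lia).
  destruct (Nat.ltb_spec k r), (Nat.ltb_spec k (S r)); try lia.
  - rewrite (Hf r) by lia; cring.
  - replace k with r by lia; cring.
  - rewrite (Hf r) by lia; cring.
Qed.

Lemma Csum_scal r (f : nat -> C) k : Csum r (fun l => k * f l) = k * Csum r f.
Proof. induction r as [|r IH]; [simpl; cring|]. rewrite !Csum_S, IH; cring. Qed.

Lemma Csum_minus r (f g : nat -> C) : Csum r (fun l => f l - g l) = Csum r f - Csum r g.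
Proof. induction r as [|r IH]; [simpl; cring|]. rewrite !Csum_S, IH; cring. Qed.

Definition skip (l0 l : nat) : nat := if (l <? l0)%nat then l else S l.

Lemma Csum_skip r l0 (f : nat -> C) : (l0 <= r)%nat -> f l0 = 0 ->
  Csum (S r) f = Csum r (fun l => f (skip l0 l)).
Proof.
  induction r as [|r IH]; intros Hl0 Hf.
  - replace l0 with 0%nat in Hf by lia. rewrite Csum_S, Hf; simpl; cring.
  - destruct (Nat.eq_dec l0 (S r)) as [->|Hne].
    + rewrite Csum_S, Hf, (Csum_ext (S r) (fun l => f (skip (S r) l)) f); [cring|].
      intros l Hl; unfold skip; destruct (Nat.ltb_spec l (S r)); [reflexivity|lia].
    + rewrite Csum_S, IH by (lia || exact Hf). rewrite Csum_S.
      replace (skip l0 r) with (S r); [reflexivity|].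
      unfold skip; destruct (Nat.ltb_spec r l0); lia.
Qed.

Lemma tsum_Csum m f p q s : tsum m f p q s = Csum m (fun i => f i p q s).
Proof. induction m as [|m IH]; [reflexivity|]. simpl; rewrite IH; reflexivity. Qed.

Ltac destruct_nat_tests := repeat match goal with
  | |- context [Nat.eqb ?x ?y] => destruct (Nat.eqb_spec x y)
  | |- context [Nat.ltb ?x ?y] => destruct (Nat.ltb_spec x y)
  end.

Definition matmul_support (n : nat) (p q s : idx) : bool :=
  ((fst p <? n)%nat && (snd p <? n)%nat && (snd q <? n)%nat &&
   (snd p =? fst q)%nat && (snd q =? fst s)%nat && (snd s =? fst p)%nat)%bool.

Lemma matmul_tensor_E n p q s :
  matmul_tensor n p q s = if matmul_support n p q s then Defs.C1 else Defs.C0.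
Proof.
  unfold matmul_tensor; rewrite tsum_Csum, (Csum_single n _ (fst p)).
  2:{ intros i _ Hi; rewrite tsum_Csum; apply Csum_eq0; intros j _.
      rewrite tsum_Csum; apply Csum_eq0; intros k _; unfold basis3; simpl.
      destruct (Nat.eqb_spec (fst p) i); [congruence|reflexivity]. }
  destruct (Nat.ltb_spec (fst p) n).
  2:{ unfold matmul_support; destruct (Nat.ltb_spec (fst p) n); [lia|reflexivity]. }
  rewrite tsum_Csum, (Csum_single n _ (snd p)).
  2:{ intros j _ Hj; rewrite tsum_Csum; apply Csum_eq0; intros k _; unfold basis3; simpl.
      rewrite Nat.eqb_refl; destruct (Nat.eqb_spec (snd p) j); [congruence|reflexivity]. }
  destruct (Nat.ltb_spec (snd p) n).
  2:{ unfold matmul_support; destruct (Nat.ltb_spec (snd p) n); [lia|].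
      rewrite Bool.andb_false_r; reflexivity. }
  rewrite tsum_Csum, (Csum_single n _ (snd q)).
  2:{ intros k _ Hk; unfold basis3; simpl.
      destruct (Nat.eqb_spec (snd q) k); [congruence|]. rewrite !Bool.andb_false_r; reflexivity. }
  unfold matmul_support, basis3; simpl; destruct_nat_tests; simpl; reflexivity || lia.
Qed.

Lemma Cmod_matmul_tensor_le1 n p q s : (Cmod (matmul_tensor n p q s) <= 1)%R.
Proof.
  rewrite matmul_tensor_E; destruct (matmul_support n p q s).
  - change Defs.C1 with (RtoC 1); rewrite Cmod_1; lra.
  - change Defs.C0 with (RtoC 0); rewrite Cmod_0; lra.
Qed.

Lemma matmul_red_correction_E n p q s : (1 <= n)%nat ->
  tsum n (fun j => basis3 (0%nat, (n - 1)%nat) ((n - 1)%nat, j) (j, 0%nat)) p q s =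
  if ((fst p =? 0) && (snd p =? n - 1))%nat%bool
  then matmul_tensor n (0%nat, (n - 1)%nat) q s else Defs.C0.
Proof.
  intros Hn; rewrite matmul_tensor_E, tsum_Csum, (Csum_single n _ (snd q)).
  2:{ intros j _ Hj; unfold basis3; simpl.
      destruct (Nat.eqb_spec (snd q) j); [congruence|]. rewrite !Bool.andb_false_r; reflexivity. }
  unfold matmul_support, basis3; simpl; destruct_nat_tests; simpl; reflexivity || lia.
Qed.

Lemma matmul_red_slice n q s : (1 <= n)%nat ->
  matmul_red n (0%nat, (n - 1)%nat) q s = (0 : C).
Proof.
  intros Hn; unfold matmul_red, tsub; rewrite matmul_red_correction_E by exact Hn.
  simpl; rewrite !Nat.eqb_refl; simpl; cring.
Qed.

Lemma matmul_red_off_slice n p q s : (1 <= n)%nat -> p <> (0%nat, (n - 1)%nat) ->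
  matmul_red n p q s = matmul_tensor n p q s.
Proof.
  intros Hn Hp; unfold matmul_red, tsub; rewrite matmul_red_correction_E by exact Hn.
  destruct p as [i j]; simpl.
  destruct (Nat.eqb_spec i 0), (Nat.eqb_spec j (n - 1)); subst; simpl; try congruence; cring.
Qed.

Definition transpose_nat (a b x : nat) : nat :=
  if (x =? a)%nat then b else if (x =? b)%nat then a else x.

Lemma transpose_nat_eqb a b x y :
  (transpose_nat a b x =? transpose_nat a b y)%nat = (x =? y)%nat.
Proof.
  unfold transpose_nat.
  destruct (Nat.eqb_spec x a), (Nat.eqb_spec x b), (Nat.eqb_spec y a), (Nat.eqb_spec y b);
    destruct_nat_tests; reflexivity || lia.
Qed.

Lemma transpose_nat_ltb a b n x : (a < n)%nat -> (b < n)%nat ->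
  (transpose_nat a b x <? n)%nat = (x <? n)%nat.
Proof. intros; unfold transpose_nat; destruct_nat_tests; subst; reflexivity || lia. Qed.

Lemma transpose_nat_lt a b n x : (a < n)%nat -> (b < n)%nat -> (x < n)%nat ->
  (transpose_nat a b x < n)%nat.
Proof. intros; unfold transpose_nat; destruct_nat_tests; lia. Qed.

Lemma transpose_nat_l a b : transpose_nat a b a = b.
Proof. unfold transpose_nat; rewrite Nat.eqb_refl; reflexivity. Qed.

(* Relabelling rows [0 <-> i0] and columns [n-1 <-> j0] of the three matrix
   spaces is a symmetry of [M] moving the coordinate [(i0, j0)] of [A] to
   [(0, n-1)]; the rescaling by powers of [t] is a torus symmetry of [M]:
   its three factors multiply to [1] on the support of [M]. *)
Definition permA n i0 j0 (p : idx) : idx :=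
  (transpose_nat 0 i0 (fst p), transpose_nat (n - 1) j0 (snd p)).
Definition permB n j0 (q : idx) : idx := (transpose_nat (n - 1) j0 (fst q), snd q).
Definition permC i0 (s : idx) : idx := (fst s, transpose_nat 0 i0 (snd s)).

Definition scaleA n (t : R) (p : idx) : R :=
  ((if (fst p =? 0)%nat then 1 else t) * (if (snd p =? n - 1)%nat then 1 else t))%R.
Definition scaleB n (t : R) (q : idx) : R := if (fst q =? n - 1)%nat then 1%R else (/ t)%R.
Definition scaleC (t : R) (s : idx) : R := if (snd s =? 0)%nat then 1%R else (/ t)%R.

Lemma matmul_support_perm n i0 j0 p q s : (1 <= n)%nat -> (i0 < n)%nat -> (j0 < n)%nat ->
  matmul_support n (permA n i0 j0 p) (permB n j0 q) (permC i0 s) = matmul_support n p q s.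
Proof.
  intros; unfold matmul_support, permA, permB, permC; simpl.
  rewrite !(transpose_nat_ltb _ _ n), !transpose_nat_eqb by lia; reflexivity.
Qed.

Lemma matmul_tensor_symmetry n t i0 j0 p q s :
  (1 <= n)%nat -> (i0 < n)%nat -> (j0 < n)%nat -> t <> 0%R ->
  matmul_tensor n p q s =
  RtoC (scaleA n t p * scaleB n t q * scaleC t s) *
  matmul_tensor n (permA n i0 j0 p) (permB n j0 q) (permC i0 s).
Proof.
  intros Hn Hi0 Hj0 Ht; rewrite !matmul_tensor_E, matmul_support_perm by assumption.
  destruct (matmul_support n p q s) eqn:Hsupp; [|cring].
  unfold matmul_support in Hsupp; rewrite !Bool.andb_true_iff, !Nat.eqb_eq in Hsupp.
  destruct Hsupp as [[[[[_ _] _] Hpq] _] Hsp].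
  replace (scaleA n t p * scaleB n t q * scaleC t s)%R with 1%R; [cring|].
  unfold scaleA, scaleB, scaleC; rewrite Hpq, Hsp.
  destruct (fst p =? 0)%nat, (fst q =? n - 1)%nat; field; exact Ht.
Qed.

Lemma scaleA_E n t : scaleA n t (0%nat, (n - 1)%nat) = 1%R.
Proof. unfold scaleA; simpl; rewrite Nat.eqb_refl; ring. Qed.

Lemma scaleA_pos n t p : (0 < t)%R -> (0 < scaleA n t p)%R.
Proof. intros; unfold scaleA; destruct (fst p =? 0)%nat, (snd p =? n - 1)%nat; nra. Qed.

Lemma scaleA_le n t p : (0 < t <= 1)%R -> p <> (0%nat, (n - 1)%nat) -> (scaleA n t p <= t)%R.
Proof.
  intros Ht Hp; destruct p as [i j]; unfold scaleA; simpl.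
  destruct (Nat.eqb_spec i 0), (Nat.eqb_spec j (n - 1)); subst; try congruence; nra.
Qed.

Lemma scale_prod_le n t p q s : (0 < t <= 1)%R ->
  (0 <= scaleA n t p * scaleB n t q * scaleC t s <= / t * / t)%R.
Proof.
  intros Ht.
  assert (1 <= / t)%R by (rewrite <- Rinv_1; apply Rinv_le_contravar; lra).
  assert (scaleA n t p <= 1)%R
    by (unfold scaleA; destruct (fst p =? 0)%nat, (snd p =? n - 1)%nat; nra).
  pose proof (scaleA_pos n t p (proj1 Ht)).
  unfold scaleB, scaleC; destruct (fst q =? n - 1)%nat, (snd s =? 0)%nat; nra.
Qed.

Lemma in_range_permA n i0 j0 p : (i0 < n)%nat -> (j0 < n)%nat ->
  in_range n p -> in_range n (permA n i0 j0 p).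
Proof. intros ? ? [? ?]; split; simpl; apply transpose_nat_lt; lia. Qed.

Lemma in_range_permB n j0 q : (j0 < n)%nat -> in_range n q -> in_range n (permB n j0 q).
Proof. intros ? [? ?]; split; simpl; [apply transpose_nat_lt|]; lia. Qed.

Lemma in_range_permC n i0 s : (i0 < n)%nat -> in_range n s -> in_range n (permC i0 s).
Proof. intros ? [? ?]; split; simpl; [|apply transpose_nat_lt]; lia. Qed.

Lemma permA_E n i0 j0 : permA n i0 j0 (0%nat, (n - 1)%nat) = (i0, j0).
Proof. unfold permA; simpl; rewrite !transpose_nat_l; reflexivity. Qed.

Definition approximates (n r : nat) (T : tensor) (a b c : nat -> vec) (eps : R) : Prop :=
  forall p q s, in_range n p -> in_range n q -> in_range n s ->
    (Cmod (T p q s - sum_rank_one r a b c p q s) <= eps)%R.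

Lemma approximates_le n r T a b c eps eps' : (eps <= eps')%R ->
  approximates n r T a b c eps -> approximates n r T a b c eps'.
Proof. intros Hle H p q s Hp Hq Hs; specialize (H p q s Hp Hq Hs); lra. Qed.

Lemma border_rank_le_approximates n T r : border_rank_le n T r <->
  forall eps, (0 < eps)%R -> exists a b c, approximates n r T a b c eps.
Proof.
  split; intros H eps Heps.
  - destruct (H eps Heps) as (a & b & c & Happ); exists a, b, c.
    intros p q s Hp Hq Hs; specialize (Happ p q s Hp Hq Hs).
    rewrite Cmod_Defs in Happ; apply Rlt_le, Happ.
  - destruct (H (eps / 2)%R) as (a & b & c & Happ); [lra|]; exists a, b, c.
    intros p q s Hp Hq Hs; specialize (Happ p q s Hp Hq Hs).
    rewrite Cmod_Defs; change (Csub ?x ?y) with (x - y); lra.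
Qed.

Lemma sum_rank_one_nonzero r a b c p q s : sum_rank_one r a b c p q s <> (0 : C) ->
  exists l, (l < r)%nat /\ a l p <> (0 : C).
Proof.
  induction r as [|r IH]; intros Hsum; [contradiction Hsum; reflexivity|].
  destruct (classic (a r p = (0 : C))) as [Har|Har]; [|exists r; split; [lia|exact Har]].
  destruct IH as (l & Hl & Hal); [|exists l; split; [lia|exact Hal]].
  intros H0; apply Hsum; unfold sum_rank_one in *; rewrite Csum_S, H0, Har; cring.
Qed.

Lemma approximates_transform n r T a b c (σ τ ρ : idx -> idx) (f g h : idx -> R) K δ :
  (forall p, in_range n p -> in_range n (σ p)) ->
  (forall q, in_range n q -> in_range n (τ q)) ->
  (forall s, in_range n s -> in_range n (ρ s)) ->
  (forall p q s, in_range n p -> in_range n q -> in_range n s ->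
     T p q s = RtoC (f p * g q * h s) * T (σ p) (τ q) (ρ s)) ->
  (forall p q s, in_range n p -> in_range n q -> in_range n s ->
     0 <= f p * g q * h s <= K)%R ->
  approximates n r T a b c δ ->
  approximates n r T (fun l p => RtoC (f p) * a l (σ p))
    (fun l q => RtoC (g q) * b l (τ q)) (fun l s => RtoC (h s) * c l (ρ s)) (K * δ).
Proof.
  intros Hσ Hτ Hρ HT Hfgh Happ p q s Hp Hq Hs.
  pose proof (Happ _ _ _ (Hσ p Hp) (Hτ q Hq) (Hρ s Hs)) as Hδ.
  pose proof (Hfgh p q s Hp Hq Hs) as HK.
  rewrite HT by assumption.
  replace (sum_rank_one r _ _ _ p q s) with
    (RtoC (f p * g q * h s) * sum_rank_one r a b c (σ p) (τ q) (ρ s)).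
  2:{ unfold sum_rank_one; rewrite <- Csum_scal; apply Csum_ext; intros l _.
      rewrite !RtoC_mult; cring. }
  set (D := T (σ p) (τ q) (ρ s) - sum_rank_one r a b c (σ p) (τ q) (ρ s)).
  replace (_ - _) with (RtoC (f p * g q * h s) * D) by (unfold D; cring).
  rewrite Cmod_RtoC_mult by lra; pose proof (Cmod_ge_0 D) as HD0.
  apply Rmult_le_compat; [lra | exact HD0 | lra | exact Hδ].
Qed.

Lemma approximates_drop_term n r T T' a b c l0 E t :
  (l0 <= r)%nat -> in_range n E -> (0 <= t <= 1)%R -> a l0 E <> (0 : C) ->
  (forall p, in_range n p -> p <> E -> Cmod (a l0 p) <= t * Cmod (a l0 E))%R ->
  (forall q s, in_range n q -> in_range n s -> Cmod (T E q s) <= 1)%R ->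
  (forall q s, in_range n q -> in_range n s -> T' E q s = (0 : C)) ->
  (forall p q s, in_range n p -> in_range n q -> in_range n s -> p <> E ->
     T' p q s = T p q s) ->
  approximates n (S r) T a b c t ->
  exists a' b' c', approximates n r T' a' b' c' (3 * t).
Proof.
  intros Hl0 HE Ht HaE Ha HT HT'E HT' Happ.
  set (w p := a l0 p / a l0 E).
  exists (fun l p => a (skip l0 l) p - w p * a (skip l0 l) E),
    (fun l => b (skip l0 l)), (fun l => c (skip l0 l)).
  intros p q s Hp Hq Hs.
  set (approx := fun p => sum_rank_one (S r) a b c p q s).
  replace (sum_rank_one r _ _ _ p q s) with (approx p - w p * approx E).
  2:{ transitivity (Csum (S r) (fun l => (a l p - w p * a l E) * b l q * c l s)).
      - unfold approx, sum_rank_one; rewrite <- Csum_scal, <- Csum_minus.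
        apply Csum_ext; intros l _; cring.
      - rewrite (Csum_skip r l0) by (exact Hl0 || (unfold w; field; exact HaE)).
        apply Csum_ext; intros l _; cring. }
  destruct (idx_eq_dec p E) as [->|HpE].
  { replace (w E) with (RtoC 1) by (unfold w; field; exact HaE).
    rewrite HT'E by assumption.
    replace (_ - _) with (RtoC 0) by cring; rewrite Cmod_0; lra. }
  assert (Hw : (Cmod (w p) <= t)%R).
  { unfold w; rewrite Cmod_div by exact HaE.
    apply Cmod_gt_0 in HaE.
    replace t with (t * Cmod (a l0 E) / Cmod (a l0 E))%R by (field; lra).
    apply Rmult_le_compat_r; [left; apply Rinv_0_lt_compat; lra | exact (Ha p Hp HpE)]. }
  pose proof (Happ p q s Hp Hq Hs) as Hp_err; pose proof (Happ E q s HE Hq Hs) as HE_err.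
  pose proof (HT q s Hq Hs) as HTE; pose proof (Cmod_ge_0 (w p)).
  rewrite HT' by assumption.
  replace (_ - _) with ((T p q s - approx p) - w p * (T E q s - approx E) + w p * T E q s) by cring.
  eapply Rle_trans; [apply Cmod_triangle|].
  eapply Rle_trans; [apply Rplus_le_compat_r, Cmod_triangle|].
  rewrite Cmod_opp, !Cmod_mult.
  pose proof (Cmod_ge_0 (T E q s - approx E)); pose proof (Cmod_ge_0 (T E q s)).
  assert (Cmod (w p) * Cmod (T E q s - approx E) <= t * t)%R
    by (apply Rmult_le_compat; [lra | lra | exact Hw | exact HE_err]).
  assert (Cmod (w p) * Cmod (T E q s) <= t * 1)%R by (apply Rmult_le_compat; lra).
  unfold approx in *; nra.
Qed.

Lemma argmax_list {X : Type} (f : X -> R) (l : list X) (x0 : X) : In x0 l ->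
  exists x, In x l /\ forall y, In y l -> (f y <= f x)%R.
Proof.
  induction l as [|x l IH] in x0 |- *; intros Hin; [destruct Hin|].
  destruct l as [|y l].
  - exists x; split; [left; reflexivity|]; intros y [<-|[]]; lra.
  - destruct (IH y (or_introl eq_refl)) as (m & Hm & Hmax).
    destruct (Rle_dec (f x) (f m)).
    + exists m; split; [right; exact Hm|]; intros z [<-|Hz]; [lra|auto].
    + exists x; split; [left; reflexivity|]; intros z [<-|Hz]; [lra|].
      specialize (Hmax z Hz); lra.
Qed.

Lemma argmax_range (f : idx -> R) n : (1 <= n)%nat ->
  exists p, in_range n p /\ forall q, in_range n q -> (f q <= f p)%R.
Proof.
  intros Hn.
  destruct (argmax_list f (list_prod (seq 0 n) (seq 0 n)) (0%nat, 0%nat)) as ([i j] & Hij & Hmax).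
  { apply in_prod_iff; rewrite in_seq; lia. }
  apply in_prod_iff in Hij; rewrite !in_seq in Hij.
  exists (i, j); split; [split; simpl; lia|].
  intros [k l] [Hk Hl]; apply Hmax, in_prod_iff; rewrite !in_seq; simpl in *; lia.
Qed.

Lemma matmul_approximation_factor n r a b c δ : (1 <= n)%nat -> (δ < 1)%R ->
  approximates n r (matmul_tensor n) a b c δ ->
  exists l, (l < r)%nat /\ a l (0%nat, 0%nat) <> (0 : C).
Proof.
  intros Hn Hδ Happ; apply (sum_rank_one_nonzero r a b c _ (0%nat, 0%nat) (0%nat, 0%nat)).
  assert (H00 : in_range n (0%nat, 0%nat)) by (split; simpl; lia).
  specialize (Happ _ _ _ H00 H00 H00); intros Hsum; rewrite Hsum in Happ.
  rewrite matmul_tensor_E in Happ; unfold matmul_support in Happ; simpl in Happ.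
  destruct (Nat.ltb_spec 0 n); [|lia]; simpl in Happ.
  replace (Defs.C1 - 0) with (RtoC 1) in Happ by cring; rewrite Cmod_1 in Happ; lra.
Qed.

Lemma border_rank_le_matmul_pos n r : (1 <= n)%nat ->
  border_rank_le n (matmul_tensor n) r -> (0 < r)%nat.
Proof.
  intros Hn H.
  destruct (proj1 (border_rank_le_approximates _ _ _) H (1 / 2)%R) as (a & b & c & Happ); [lra|].
  destruct (matmul_approximation_factor n r a b c (1 / 2) Hn) as (l & Hl & _); [lra|exact Happ|lia].
Qed.

Lemma matmul_approximates_normalize n r a b c l0 p0 t :
  (1 <= n)%nat -> (0 < t <= 1)%R -> in_range n p0 -> a l0 p0 <> (0 : C) ->
  approximates n r (matmul_tensor n) a b c (t * t * t) ->
  exists a' b' c', approximates n r (matmul_tensor n) a' b' c' t /\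
    a' l0 (0%nat, (n - 1)%nat) <> (0 : C) /\
    (forall p, in_range n p -> p <> (0%nat, (n - 1)%nat) ->
       Cmod (a' l0 p) <= t * Cmod (a' l0 (0%nat, (n - 1)%nat)))%R.
Proof.
  intros Hn Ht Hp0 Ha0 Happ.
  destruct (argmax_range (fun p => Cmod (a l0 p)) n Hn) as ([i0 j0] & [Hi0 Hj0] & Hmax).
  simpl in Hi0, Hj0, Hmax.
  assert (Hmax_pos : (0 < Cmod (a l0 (i0, j0)))%R).
  { apply Cmod_gt_0 in Ha0; pose proof (Hmax p0 Hp0); lra. }
  assert (Ht0 : t <> 0%R) by lra.
  pose proof (approximates_transform n r (matmul_tensor n) a b c
    (permA n i0 j0) (permB n j0) (permC i0) (scaleA n t) (scaleB n t) (scaleC t)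
    (/ t * / t) (t * t * t)
    (fun p => in_range_permA n i0 j0 p Hi0 Hj0) (fun q => in_range_permB n j0 q Hj0)
    (fun s => in_range_permC n i0 s Hi0)
    (fun p q s _ _ _ => matmul_tensor_symmetry n t i0 j0 p q s Hn Hi0 Hj0 Ht0)
    (fun p q s _ _ _ => scale_prod_le n t p q s Ht) Happ) as Hsym.
  replace (/ t * / t * (t * t * t))%R with t in Hsym by (field; lra).
  eexists _, _, _; split; [exact Hsym|].
  assert (HaE : RtoC (scaleA n t (0%nat, (n - 1)%nat)) * a l0 (permA n i0 j0 (0%nat, (n - 1)%nat))
                = a l0 (i0, j0)) by (rewrite scaleA_E, permA_E; cring).
  cbv beta; rewrite HaE; split; [apply Cmod_gt_0, Hmax_pos|].
  intros p Hp HpE; rewrite Cmod_RtoC_mult by (pose proof (scaleA_pos n t p); lra).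
  pose proof (scaleA_le n t p Ht HpE); pose proof (Cmod_ge_0 (a l0 (permA n i0 j0 p))).
  pose proof (Hmax _ (in_range_permA n i0 j0 p Hi0 Hj0 Hp)); nra.
Qed.

Lemma border_rank_le_matmul_red n r : (1 <= n)%nat ->
  border_rank_le n (matmul_tensor n) (S r) -> border_rank_le n (matmul_red n) r.
Proof.
  intros Hn HM; apply border_rank_le_approximates; intros eps Heps.
  set (t := Rmin (1 / 2) (eps / 4)).
  assert (Ht : (0 < t <= 1 / 2)%R) by (unfold t; apply Rmin_case_strong; lra).
  assert (Hte : (t <= eps / 4)%R) by apply Rmin_r.
  assert (Ht3 : (0 < t * t * t < 1)%R).
  { assert (0 < t * t <= 1)%R by (split; nra); split; nra. }
  assert (H00 : in_range n (0%nat, 0%nat)) by (split; simpl; lia).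
  destruct (proj1 (border_rank_le_approximates _ _ _) HM (t * t * t)%R)
    as (a & b & c & Happ); [lra|].
  destruct (matmul_approximation_factor n (S r) a b c (t * t * t) Hn) as (l0 & Hl0 & Ha0);
    [lra | exact Happ |].
  destruct (matmul_approximates_normalize n (S r) a b c l0 (0%nat, 0%nat) t)
    as (a' & b' & c' & Happ' & Ha'E & Ha'_small); [assumption || lra .. |].
  destruct (approximates_drop_term n r (matmul_tensor n) (matmul_red n) a' b' c' l0
    (0%nat, (n - 1)%nat) t) as (a'' & b'' & c'' & Hred);
    [lia | split; simpl; lia | lra | exact Ha'E | exact Ha'_small | | | | exact Happ' |].
  - intros; apply Cmod_matmul_tensor_le1.
  - intros; apply matmul_red_slice, Hn.
  - intros; apply matmul_red_off_slice; assumption.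
  - exists a'', b'', c''; apply (approximates_le _ _ _ _ _ _ (3 * t)); [lra | exact Hred].
Qed.

Theorem corollary5p3 (n : nat) (Hn : (2 <= n)%nat) (r rred : nat) :
  is_border_rank n (matmul_tensor n) r ->
  is_border_rank n (matmul_red n) rred ->
  (rred + 1 <= r)%nat.
Proof.
  intros [HM _] [_ Hred_min].
  assert (Hn1 : (1 <= n)%nat) by lia.
  destruct r as [|r]; [pose proof (border_rank_le_matmul_pos n 0 Hn1 HM); lia|].
  pose proof (Hred_min r (border_rank_le_matmul_red n r Hn1 HM)); lia.
Qed.
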